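(* In the odd setting below, for all $i,j\in\{1,\dots,n\}$ and $\ell\in\{0,\dots,s-1\}$, the determinant $D^j_{2\ell,i}$ is homogeneous of degree $\ell/s$.
   Context: Odd setting: integers $n\ge1$, $s\ge1$, $m=2s+1$; $a_k^0,\dots,a_k^{2s}$ are $n\times n$ matrices with indeterminate entries, $N$-periodic in $k$. $Q_k$ is the $mn\times mn$ block matrix with $I_n$ in blocks $(i+1,i)$, last block column $(a_k^0;\dots;a_k^{2s})$, $O_n$ elsewhere. $r_k=(a_k^0;O_n;a_k^2;O_n;\dots;O_n;a_k^{2s})$. $F^{(k)}_0=r_k$, $F^{(k)}_\ell=Q_k\cdots Q_{k+\ell-1}r_{k+\ell}$ ($mn\times n$), $N_k=(F^{(k)}_0,\dots,F^{(k)}_{2s})$. For $0\le \rho\le 2s$, $D^j_{\rho,i}$ (for a fixed $k$) is the determinant of the matrix obtained from $N_k$ by replacing the $i$-th column of the block column $F^{(k)}_\rho$ by the $j$-th column of $F^{(k)}_{2s+1}$. The scaling, for $\mu>0$: $a^{2r+1}\mapsto\mu^{-1+r/s}a^{2r+1}$ ($r=0,\dots,s-1$), $a^{2r}\mapsto\mu^{r/s}a^{2r}$ ($r=0,\dots,s$); homogeneous of degree $d$ means multiplied by $\mu^d$. *)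

From HB Require Import structures.
From mathcomp Require Import all_boot all_order all_algebra.
Set Implicit Arguments. Unset Strict Implicit. Unset Printing Implicit Defensive.
Import Order.TTheory GRing.Theory Num.Theory.
Local Open Scope ring_scope.

Section OddSetting.
Variables (R : comRingType) (n s : nat).

Definition msz : nat := (2 * s).+1.

(* a k r = a_k^r  (superscript r in 0..2s; other r unused) *)
Variable a : nat -> nat -> 'M[R]_n.

(* block decomposition of a big index p : 'I_(m*n) as (block, inner),
   lexicographic: p = block * n + inner *)
Definition blk (p : 'I_(msz * n)) : 'I_msz * 'I_n :=
  enum_val (cast_ord (esym (mxvec_cast msz n)) p).

(* Q_k : I_n in blocks (i+1,i), last block column (a_k^0; ...; a_k^{2s}) *)
Definition Qmx (k : nat) : 'M[R]_(msz * n) :=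
  \matrix_(p, q)
    let: (bi, ii) := blk p in let: (bj, jj) := blk q in
    if nat_of_ord bj == (2 * s)%N then a k bi ii jj
    else if nat_of_ord bi == (nat_of_ord bj).+1 then (ii == jj)%:R else 0.

Definition rmx (k : nat) : 'M[R]_(msz * n, n) :=
  \matrix_(p, j) let: (bi, ii) := blk p in
    if odd bi then 0 else a k bi ii j.

Fixpoint Qprod (k l : nat) : 'M[R]_(msz * n) :=
  match l with
  | 0 => 1%:M
  | l'.+1 => Qprod k l' *m Qmx (k + l')
  end.

Definition Fmx (k l : nat) : 'M[R]_(msz * n, n) := Qprod k l *m rmx (k + l).

Definition Nmx (k : nat) : 'M[R]_(msz * n) :=
  \matrix_(p, q) let: (bj, jj) := blk q in Fmx k bj p jj.

(* D^j_{rho,i}: determinant of N_k with column i of block column F_rho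
   replaced by column j of F_{2s+1} *)
Definition Ddet (k rho : nat) (i j : 'I_n) : R :=
  \det (\matrix_(p, q)
          if (nat_of_ord (blk q).1 == rho) && ((blk q).2 == i)
          then Fmx k (2 * s).+1 p j else Nmx k p q).

End OddSetting.

(* The scaling with parameter mu = t^s (t = mu^{1/s} > 0):
   a^{2r+1} |-> mu^{-1+r/s} a^{2r+1} = mu^{-1} t^r a^{2r+1},
   a^{2r}   |-> mu^{r/s} a^{2r}      = t^r a^{2r}. *)
Definition scale_coef (R : unitRingType) (mu t : R) (r : nat) : R :=
  if odd r then mu^-1 * t ^+ r./2 else t ^+ r./2.

Definition scaled (R : unitRingType) (n : nat) (mu t : R)
    (a : nat -> nat -> 'M[R]_n) : nat -> nat -> 'M[R]_n :=
  fun k r => scale_coef mu t r *: a k r.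

From HB Require Import structures.
From mathcomp Require Import all_boot all_order all_algebra.
From mathcomp Require Import ring zify.
Import Order.TTheory GRing.Theory Num.Theory.
Local Open Scope ring_scope.

Set Implicit Arguments. Unset Strict Implicit. Unset Printing Implicit Defensive.

(* The scaling is undone by a diagonal change of basis up to a rank-[n] correction. With
   [G_x] multiplying block [b] by [t ^ (s - b/2 + [x odd and b even])], one has
   [t ^ [x even] G_x Q'_(k+x) = (Q_(k+x) + beta_x r_(k+x) pi) G_(x+1)], where [pi] projects
   onto the last block and [beta_x = t ^ (s + [x odd]) - 1]: odd and even coefficients of
   the scaling differ exactly by the factor [mu = t ^ s]. Hence [t ^ (s - l) D'_(2l)] is the
   determinant [D_(2l)] of the perturbed system [Q + beta r pi].
   The perturbation multiplies [N_k] on the right by a unipotent block-triangular matrix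
   and changes only block [rho] of the Cramer solution [X = N_k^-1 F_(2s+1)], by
   [beta_rho pi U_(rho+1)], where [U] is the residual of the backward recursion solved by
   [X]. The block-sign involution [J] satisfies [J Q J = -Q + 2 r pi] and [J r = r], so
   uniqueness for the backward recursion gives [pi U_(rho+1) = X_rho] for even [rho]. Thus
   [D_(2l)] is multiplied by [1 + beta_(2l) = t ^ s], i.e. [D'_(2l) = t ^ l D_(2l)].
   Invertibility of [N_k] is only needed generically: deforming the coefficients towards
   [a^0 = I], [a^r = 0] ([r > 0]), for which [N_k = I], it holds over polynomials. *)

Lemma index_allpairs (T1 T2 : eqType) (s1 : seq T1) (s2 : seq T2) x y :
  x \in s1 -> y \in s2 ->
  index (x, y) [seq (x1, x2) | x1 <- s1, x2 <- s2] =
    (index x s1 * size s2 + index y s2)%N.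
Proof.
elim: s1 => //= z s1 IH xs ys2; rewrite index_cat.
have [<-|nzx] := eqVneq z x.
  rewrite (index_map (f := pair z)); last by move=> u v [].
  by rewrite mem_map ?ys2 // ?eqxx ?mul0n ?add0n //; move=> u v [].
have -> : ((x, y) \in [seq (z, x2) | x2 <- s2]) = false.
  by apply/negbTE/mapP=> [[w _ [/esym /eqP]]]; rewrite (negbTE nzx).
move: xs; rewrite inE eq_sym (negbTE nzx) /= => xs.
by rewrite size_map IH // mulSn addnA.
Qed.

Lemma val_mxvec_index m n (i : 'I_m) (j : 'I_n) :
  nat_of_ord (mxvec_index i j) = (i * n + j)%N.
Proof.
rewrite /mxvec_index /= /enum_rank enum_rank_in.unlock /= insubdK; last first.
  by rewrite unfold_in /= cardE index_mem mem_enum.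
rewrite enumT unlock /= /prod_enum index_allpairs ?mem_enum //.
by rewrite !index_enum_ord size_enum_ord.
Qed.

Section BlockIndex.
Variables (n s : nat).
Local Notation M := (msz s * n)%N.
Local Notation idx := (@mxvec_index (msz s) n).

Lemma blk_mxvec_index b i : blk (idx b i) = (b, i).
Proof. by rewrite /blk /mxvec_index cast_ordK enum_rankK. Qed.

Lemma mxvec_index_blk (p : 'I_M) : idx (blk p).1 (blk p).2 = p.
Proof. by case/mxvec_indexP: p => b i; rewrite blk_mxvec_index. Qed.

Lemma eq_mxvec_index (p : 'I_M) (b : 'I_(msz s)) i :
  (p == idx b i) = (nat_of_ord (blk p).1 == b) && ((blk p).2 == i).
Proof.
rewrite -[p]mxvec_index_blk blk_mxvec_index; case: (blk p) => b' i' /=.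
apply/eqP/andP => [/(congr1 (@blk n s))|[/eqP/val_inj-> /eqP->] //].
by rewrite !blk_mxvec_index => -[-> ->].
Qed.

Lemma big_blk (V : nmodType) (f : 'I_M -> V) :
  \sum_(q < M) f q = \sum_(b < msz s) \sum_(i < n) f (idx b i).
Proof.
rewrite pair_big /= (reindex (fun u => idx u.1 u.2)) //.
exists (fun q => blk q) => [[b i] _|q _] /=; first by rewrite blk_mxvec_index.
exact: mxvec_index_blk.
Qed.

Lemma ltn_blk (p q : 'I_M) : ((blk p).1 < (blk q).1)%N -> (p < q)%N.
Proof.
rewrite -[p]mxvec_index_blk -[q]mxvec_index_blk !blk_mxvec_index !val_mxvec_index /=.
case: (blk p) (blk q) => [bp ip] [bq iq] /= lt_b.
apply: (@leq_trans (bp.+1 * n)); first by rewrite mulSn addnC ltn_add2r.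
by apply: leq_trans (leq_addr _ _); rewrite leq_mul2r lt_b orbT.
Qed.

End BlockIndex.

Lemma det_replace_col (R : comNzRingType) N (A : 'M[R]_N) (q0 : 'I_N) (v : 'cV[R]_N) :
  \det (\matrix_(p, q) if q == q0 then v p 0 else A p q) = (\adj A *m v) q0 0.
Proof.
rewrite (expand_det_col _ q0) mxE; apply: eq_bigr => p _.
rewrite mxE eqxx mulrC mxE; congr (_ * _).
rewrite /cofactor; congr (_ * \det _).
by apply/matrixP=> x y; rewrite !mxE eq_sym (negbTE (neq_lift q0 y)).
Qed.

Lemma mulmx_eq0_det (R : idomainType) N K (A : 'M[R]_N) (Y : 'M[R]_(N, K)) :
  \det A != 0 -> A *m Y = 0 -> Y = 0.
Proof.
move=> detA AY0; have : \adj A *m (A *m Y) = 0 by rewrite AY0 mulmx0.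
rewrite mulmxA mul_adj_mx mul_scalar_mx => /eqP.
by rewrite scalemx_eq0 (negbTE detA) => /eqP.
Qed.

Section BlockColumns.
Variables (R : comNzRingType) (n s : nat).
Local Notation M := (msz s * n)%N.
Local Notation idx := (@mxvec_index (msz s) n).

Definition Nmx_of (F : nat -> 'M[R]_(M, n)) : 'M[R]_M :=
  \matrix_(p, q) F (blk q).1 p (blk q).2.

Definition Dmx_of (F : nat -> 'M[R]_(M, n)) rho i j : 'M[R]_M :=
  \matrix_(p, q)
    if (nat_of_ord (blk q).1 == rho) && ((blk q).2 == i)
    then F (2 * s).+1 p j else Nmx_of F p q.

Definition col_blocks (C : 'I_(msz s) -> 'M[R]_n) : 'M[R]_(M, n) :=
  \matrix_(p, j) C (blk p).1 (blk p).2 j.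

Definition blocks_of (X : 'M[R]_(M, n)) (b : 'I_(msz s)) : 'M[R]_n :=
  \matrix_(i, j) X (idx b i) j.

Lemma col_blocksK X : col_blocks (blocks_of X) = X.
Proof. by apply/matrixP=> p j; rewrite !mxE mxvec_index_blk. Qed.

Lemma blocks_ofK C b : blocks_of (col_blocks C) b = C b.
Proof. by apply/matrixP=> i j; rewrite !mxE blk_mxvec_index. Qed.

Lemma mul_Nmx_of_col_blocks F C :
  Nmx_of F *m col_blocks C = \sum_(b < msz s) F b *m C b.
Proof.
apply/matrixP=> p j; rewrite !mxE summxE big_blk; apply: eq_bigr => b _.
by rewrite mxE; apply: eq_bigr => i _; rewrite !mxE blk_mxvec_index.
Qed.

Lemma det_Dmx_of F (rho : 'I_(msz s)) i j :
  \det (Dmx_of F rho i j) = (\adj (Nmx_of F) *m F (msz s)) (idx rho i) j.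
Proof.
have -> : Dmx_of F rho i j =
    \matrix_(p, q) if q == idx rho i then col j (F (msz s)) p 0 else Nmx_of F p q.
  by apply/matrixP=> p q; rewrite !mxE eq_mxvec_index.
by rewrite det_replace_col !mxE; apply: eq_bigr => p _; rewrite !mxE.
Qed.

Lemma Nmx_Nmx_of a k : Nmx s a k = Nmx_of (Fmx s a k).
Proof. by apply/matrixP=> p q; rewrite [LHS]mxE [RHS]mxE; case: (blk q). Qed.

Lemma Ddet_Dmx_of a k rho i j : Ddet s a k rho i j = \det (Dmx_of (Fmx s a k) rho i j).
Proof.
congr (\det _); apply/matrixP=> p q; rewrite [LHS]mxE [RHS]mxE.
by case: ifP => // _; rewrite [LHS]mxE [RHS]mxE; case: (blk q).
Qed.

End BlockColumns.

Lemma signr_oddE (R : pzRingType) (b : nat) : (-1) ^+ b = (if odd b then -1 else 1) :> R.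
Proof. by rewrite -signr_odd; case: odd. Qed.

Section Transfer.
Variables (R : comNzRingType) (n s : nat) (a : nat -> nat -> 'M[R]_n).
Local Notation M := (msz s * n)%N.
Local Notation Q := (Qmx s a).
Local Notation r := (rmx s a).

Definition pi_last : 'M[R]_(n, M) := \matrix_(i, p) ((@blk n s p) == (ord_max, i))%:R.

Definition Jsign : 'M[R]_M := diag_mx (\row_p ((-1) ^+ (@blk n s p).1)).

Lemma rmx_pi_lastE k (p q : 'I_M) :
  (r k *m pi_last) p q =
    if nat_of_ord (blk q).1 == (2 * s)%N then r k p (blk q).2 else 0.
Proof.
rewrite mxE -[q]mxvec_index_blk blk_mxvec_index; case: (blk q) => b c /=.
case: eqP => [Hb|Hb].
  have -> : b = ord_max by apply: val_inj.
  rewrite (bigD1 c) //= big1 => [|i /negbTE Hi].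
    by rewrite !mxE blk_mxvec_index eqxx mulr1 addr0.
  by rewrite !mxE blk_mxvec_index xpair_eqE (eq_sym c) Hi andbF mulr0.
apply: big1 => i _; rewrite !mxE blk_mxvec_index xpair_eqE.
have -> : (b == ord_max) = false by apply/eqP=> Hb'; apply: Hb; rewrite Hb'.
by rewrite /= mulr0.
Qed.

Lemma Qprod_recl k L : Qprod s a k L.+1 = Q k *m Qprod s a k.+1 L.
Proof.
elim: L => [|L IH]; first by rewrite /= mul1mx addn0 mulmx1.
rewrite [LHS]/Qprod -/(Qprod s a k L.+1) IH [in RHS]/Qprod -/(Qprod s a k.+1 L).
by rewrite mulmxA addnS addSn.
Qed.

Lemma Fmx_recl k L : Fmx s a k L.+1 = Q k *m Fmx s a k.+1 L.
Proof. by rewrite /Fmx Qprod_recl mulmxA addnS addSn. Qed.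

Lemma Fmx0 k : Fmx s a k 0 = r k.
Proof. by rewrite /Fmx /= mul1mx addn0. Qed.

Lemma Jsign_invol : Jsign *m Jsign = 1%:M.
Proof.
apply/matrixP=> p q; rewrite mul_diag_mx !mxE.
case: eqP => [->|_]; last by rewrite mulr0n mulr0.
by rewrite !mulr1n signr_oddE; case: odd; rewrite ?mulrNN mulr1.
Qed.

Lemma Jsign_rmx k : Jsign *m r k = r k.
Proof.
apply/matrixP=> p j; rewrite mul_diag_mx !mxE -[p]mxvec_index_blk blk_mxvec_index.
by rewrite signr_oddE; case: (blk p) => b i /=; case: (odd b); rewrite ?mulr0 ?mul1r.
Qed.

Lemma pi_last_Jsign : pi_last *m Jsign = pi_last.
Proof.
apply/matrixP=> i p; rewrite mul_mx_diag !mxE -[p]mxvec_index_blk blk_mxvec_index.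
rewrite signr_oddE; case: (blk p) => b c /=; case: eqP => [[-> _]|_]; last by rewrite mul0r.
by rewrite /= oddM mulr1.
Qed.

(* Conjugating by [Jsign] flips the subdiagonal identities and the odd blocks of the
   last column; [2 r pi_last] restores the even ones. *)
Lemma Jsign_Qmx_Jsign k : Jsign *m Q k *m Jsign = - Q k + 2%:R *: (r k *m pi_last).
Proof.
apply/matrixP=> p q; rewrite mul_mx_diag mul_diag_mx.
rewrite !mxE; have := rmx_pi_lastE k p q; rewrite mxE => ->.
rewrite -[p]mxvec_index_blk -[q]mxvec_index_blk !blk_mxvec_index.
case: (blk p) => bp ip; case: (blk q) => bq iq /=.
rewrite mxE blk_mxvec_index !signr_oddE /=.
case: eqP => [->|_]; first by rewrite oddM /=; case: (odd bp); ring.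
case: eqP => [->|_]; last by ring.
by rewrite /=; case: (odd bq); case: (ip == iq); rewrite /= ?mulr0n ?mulr1n; ring.
Qed.

Variables (k : nat) (beta : nat -> R).

Definition Qpert x := Q (k + x) + beta x *: (r (k + x) *m pi_last).

Fixpoint Ppert L := if L is L'.+1 then Ppert L' *m Qpert L' else 1%:M.

Definition Fpert L := Ppert L *m r (k + L).

Definition Gpert x L := beta x *: (pi_last *m Fmx s a (k + x).+1 (L - x.+1)).

Lemma Qprod_Ppert L :
  Qprod s a k L = Ppert L - \sum_(0 <= x < L)
     Ppert x *m (beta x *: (r (k + x) *m pi_last)) *m Qprod s a (k + x).+1 (L - x.+1).
Proof.
elim: L => [|L IH]; first by rewrite big_geq // subr0.
rewrite /= IH big_nat_recr //= subnn /= mulmx1 mulmxBl mulmx_suml.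
have -> : Q (k + L) = Qpert L - beta L *: (r (k + L) *m pi_last) by rewrite /Qpert addrK.
rewrite mulmxBr -addrA -opprD; congr (_ - _); rewrite addrC; congr (_ + _).
apply: eq_big_nat => x /andP[_ HxL].
rewrite /Qpert addrK -[LHS]mulmxA; congr (_ *m _).
rewrite (_ : (L.+1 - x.+1)%N = (L - x.+1).+1); last by rewrite subSS subnSK.
rewrite [RHS]/Qprod -/(Qprod s a (k + x).+1 (L - x.+1)); congr (_ *m Q _).
by rewrite addSn -addnS subnSK // -addnA subnKC // ltnW.
Qed.

Lemma Fmx_Fpert L :
  Fmx s a k L = Fpert L - \sum_(0 <= x < L) Fpert x *m Gpert x L.
Proof.
rewrite /Fmx Qprod_Ppert mulmxBl mulmx_suml; congr (_ - _).
apply: eq_big_nat => x /andP[_ HxL].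
rewrite /Fpert /Gpert /Fmx (_ : ((k + x).+1 + (L - x.+1))%N = (k + L)%N); last first.
  by rewrite addSn -addnS subnSK // -addnA subnKC // ltnW.
by rewrite -!scalemxAr -!scalemxAl !mulmxA.
Qed.

End Transfer.

Section Perturbation.
Variables (R : idomainType) (n s : nat) (a : nat -> nat -> 'M[R]_n) (k : nat).
Local Notation M := (msz s * n)%N.
Local Notation m := (msz s).
Local Notation idx := (@mxvec_index (msz s) n).
Local Notation Q := (Qmx s a).
Local Notation r := (rmx s a).
Local Notation F := (Fmx s a).
Local Notation N := (Nmx s a k).
Local Notation d := (\det (Nmx s a k)).
Local Notation pi := (pi_last R n s).
Local Notation J := (Jsign R n s).

(* The backward recursion [U_y = Q_{k+y} U_{y+1} - r_{k+y} C_y], [U_m = d r_{k+m}];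
   [Ures C 0 = 0] says exactly that [C] solves [N X = d F_m]. *)
Definition Ures (C : 'I_m -> 'M[R]_n) (y : nat) : 'M[R]_(M, n) :=
  d *: F (k + y) (m - y) - \sum_(x < m | (y <= x)%N) F (k + y) (x - y) *m C x.

Lemma Ures_top C : Ures C m = d *: r (k + m).
Proof.
rewrite /Ures subnn Fmx0 big_pred0 ?subr0 // => x.
by apply/negbTE; rewrite -ltnNge ltn_ord.
Qed.

Lemma Ures_rec C (y : 'I_m) : Ures C y = Q (k + y) *m Ures C y.+1 - r (k + y) *m C y.
Proof.
have Hs : \sum_(x < m | (y <= x)%N && (x != y)) F (k + y) (x - y) *m C x =
   Q (k + y) *m \sum_(x < m | (y.+1 <= x)%N) F (k + y.+1) (x - y.+1) *m C x.
  rewrite mulmx_sumr; apply: eq_big => x; first by rewrite ltn_neqAle eq_sym andbC.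
  move=> /andP[H1 H2]; have Hlt : (y < x)%N by rewrite ltn_neqAle eq_sym H2 H1.
  by rewrite -(subnSK Hlt) Fmx_recl mulmxA addnS.
rewrite /Ures mulmxBr -scalemxAr.
have -> : (m - y = (m - y.+1).+1)%N by rewrite subnSK.
rewrite Fmx_recl -addnS (bigD1 y) //= subnn Fmx0 Hs.
by rewrite opprD addrA [LHS]addrAC.
Qed.

Lemma Ures_unique (Z : nat -> 'M[R]_(M, n)) C :
  Z m = d *: r (k + m) ->
  (forall y : 'I_m, Z y = Q (k + y) *m Z y.+1 - r (k + y) *m C y) ->
  forall y, (y <= m)%N -> Z y = Ures C y.
Proof.
move=> Ztop Zrec y le_ym; move: {2}(m - y)%N (erefl (m - y)%N) => z.
elim: z y le_ym => [|z IH] y le_ym Ez.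
  have -> : y = m by apply/eqP; rewrite eqn_leq le_ym -subn_eq0 Ez.
  by rewrite Ztop Ures_top.
have lt_ym : (y < m)%N by rewrite -subn_gt0 Ez.
rewrite (Zrec (Ordinal lt_ym)) (Ures_rec C (Ordinal lt_ym)) /= IH //.
by rewrite subnS Ez.
Qed.

Lemma Ures0E C : Ures C 0 = d *: F k m - N *m col_blocks C.
Proof.
rewrite /Ures addn0 subn0 Nmx_Nmx_of mul_Nmx_of_col_blocks; congr (_ - _).
by apply: eq_big => x // _; rewrite subn0.
Qed.

Definition Xsol := \adj N *m F k m.
Definition Xblk := blocks_of Xsol.

Lemma Nmx_Xsol : N *m Xsol = d *: F k m.
Proof. by rewrite /Xsol mulmxA mul_mx_adj mul_scalar_mx. Qed.

Lemma Ures_Xblk0 : Ures Xblk 0 = 0.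
Proof. by rewrite Ures0E /Xblk col_blocksK Nmx_Xsol subrr. Qed.

Hypothesis d_neq0 : d != 0.
Hypothesis two_neq0 : (2%:R : R) != 0.

Definition Zflip y := - ((-1) ^+ y *: (J *m Ures Xblk y)) : 'M[R]_(M, n).
Definition Cflip (y : 'I_m) :=
  (-1) ^+ y.+1 *: (Xblk y - 2%:R *: (pi *m Ures Xblk y.+1)).

Lemma Zflip_top : Zflip m = d *: r (k + m).
Proof.
by rewrite /Zflip Ures_top signr_oddE /= oddM /= scaleN1r opprK -scalemxAr Jsign_rmx.
Qed.

Lemma Zflip_rec (y : 'I_m) : Zflip y = Q (k + y) *m Zflip y.+1 - r (k + y) *m Cflip y.
Proof.
rewrite /Zflip /Cflip Ures_rec.
set U1 := Ures Xblk y.+1; set V := J *m U1.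
have HJ : J *m (Q (k + y) *m U1 - r (k + y) *m Xblk y) =
   (- Q (k + y) + 2%:R *: (r (k + y) *m pi)) *m V - r (k + y) *m Xblk y.
  rewrite mulmxBr [X in _ - X]mulmxA Jsign_rmx -Jsign_Qmx_Jsign /V; congr (_ - _).
  by rewrite !mulmxA -(mulmxA _ J J) Jsign_invol mulmx1.
have HpV : pi *m U1 = pi *m V by rewrite /V mulmxA pi_last_Jsign.
rewrite HJ HpV exprS.
do 3! rewrite ?mulmxDl ?mulmxDr ?mulmxBr ?mulmxBl ?mulmxN ?mulNmx
               -?scalemxAl -?scalemxAr -?mulmxA.
move: (Q (k + y) *m V) (r (k + y) *m (pi *m V)) (r (k + y) *m Xblk y) => A B C.
by apply/matrixP=> p j; rewrite !mxE; ring.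
Qed.

Lemma Cflip_Xblk y : Cflip y = Xblk y.
Proof.
have := Ures_unique Zflip_top Zflip_rec (leq0n m).
rewrite /Zflip Ures_Xblk0 mulmx0 scaler0 oppr0 Ures0E => /eqP.
rewrite eq_sym subr_eq0 -Nmx_Xsol -subr_eq0 -mulmxBr => /eqP/(mulmx_eq0_det d_neq0)/eqP.
by rewrite subr_eq0 => /eqP XC; rewrite -(blocks_ofK Cflip) -XC.
Qed.

Lemma pi_last_Ures (y : 'I_m) : pi *m Ures Xblk y.+1 = (~~ odd y)%:R *: Xblk y.
Proof.
have := Cflip_Xblk y; rewrite /Cflip.
move: (Xblk y) (pi *m Ures Xblk y.+1) => X P H.
apply/matrixP=> i j; move/matrixP: H => /(_ i j); rewrite !mxE signr_oddE /=.
move: (X i j) (P i j) => x p.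
case: (odd y) => /= H.
  have E : 2%:R * (p - 0%:R * x) = x - 1 * (x - 2%:R * p) by ring.
  by move: E; rewrite H subrr => /eqP; rewrite mulf_eq0 (negbTE two_neq0) subr_eq0 => /eqP.
have E : 2%:R * (p - 1%:R * x) = (-1) * (x - 2%:R * p) - x by ring.
by move: E; rewrite H subrr => /eqP; rewrite mulf_eq0 (negbTE two_neq0) subr_eq0 => /eqP.
Qed.

Variable beta : nat -> R.
Local Notation Fp := (Fpert s a k beta).
Local Notation G := (Gpert s a k beta).

Lemma Fmx_Fpert_ord L : (L <= m)%N ->
  F k L = Fp L - \sum_(x < m | (x < L)%N) Fp x *m G x L.
Proof.
move=> le_Lm; rewrite (Fmx_Fpert _ _ _ beta) big_mkord.
by rewrite (big_ord_widen m (fun x => Fp x *m G x L) le_Lm).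
Qed.

Lemma sum_Fpert_Ures :
  \sum_(y < m) Fp y *m (beta y *: (pi *m Ures Xblk y.+1)) =
  d *: (Fp m - F k m) - \sum_(y < m) \sum_(x < m | (y < x)%N) Fp y *m G y x *m Xblk x.
Proof.
have -> : Fp m - F k m = \sum_(y < m) Fp y *m G y m.
  rewrite (Fmx_Fpert_ord (leqnn m)) opprB addrC subrK.
  by apply: eq_bigl => x; rewrite ltn_ord.
rewrite scaler_sumr -sumrB; apply: eq_bigr => y _.
rewrite /Ures /Gpert addnS mulmxBr scalerBr mulmxBr; congr (_ - _).
  by rewrite -!scalemxAr scalerA mulrC -scalerA.
rewrite mulmx_sumr scaler_sumr mulmx_sumr; apply: eq_bigr => x _.
by rewrite -!scalemxAr -!scalemxAl !mulmxA.
Qed.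

Lemma scale_det_Fmx_top : d *: F k m = \sum_(x < m) Fp x *m Xblk x -
   \sum_(x < m) \sum_(y < m | (y < x)%N) Fp y *m G y x *m Xblk x.
Proof.
rewrite -Nmx_Xsol Nmx_Nmx_of -{1}[Xsol]col_blocksK mul_Nmx_of_col_blocks -sumrB.
by apply: eq_bigr => x _; rewrite (Fmx_Fpert_ord (ltnW (ltn_ord x))) mulmxBl mulmx_suml.
Qed.

Definition Xpert (y : 'I_m) := Xblk y + beta y *: (pi *m Ures Xblk y.+1).

Lemma Nmx_of_Fpert_Xpert : Nmx_of Fp *m col_blocks Xpert = d *: Fp m.
Proof.
rewrite mul_Nmx_of_col_blocks /Xpert.
under eq_bigr do rewrite mulmxDr.
rewrite big_split /= sum_Fpert_Ures scalerBr scale_det_Fmx_top (exchange_big_dep xpredT) //=.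
move: (\sum_(i < m) _) (\sum_(x < m) \sum_(y < m | _) _) (d *: Fp m) => A B C.
by apply/matrixP=> p j; rewrite !mxE; ring.
Qed.

Definition Upert : 'M[R]_M := \matrix_(p, q)
  if ((blk p).1 < (blk q).1)%N then G (blk p).1 (blk q).1 (blk p).2 (blk q).2 else 0.

Lemma Nmx_Upert : N = Nmx_of Fp *m (1%:M - Upert).
Proof.
rewrite mulmxBr mulmx1 Nmx_Nmx_of; apply/matrixP=> p q.
rewrite [LHS]mxE (Fmx_Fpert_ord (ltnW (ltn_ord (blk q).1))).
rewrite [RHS]mxE [in RHS]mxE [LHS]mxE [in LHS]mxE; congr (_ + _).
  by rewrite [RHS]mxE.
rewrite [LHS]mxE [RHS]mxE; congr (- _).
rewrite summxE [RHS]mxE big_blk big_mkcond /=; apply: eq_bigr => x _.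
case: ifP => Hx.
  by rewrite mxE; apply: eq_bigr => i _; rewrite !mxE !blk_mxvec_index /= Hx.
by rewrite big1 // => i _; rewrite [Upert _ _]mxE blk_mxvec_index /= Hx mulr0.
Qed.

Lemma det_1_Upert : \det (1%:M - Upert) = 1.
Proof.
rewrite -det_tr det_trig.
  by rewrite big1 // => p _; rewrite !mxE eqxx ltnn subr0.
apply/is_trig_mxP=> p q lt_pq; rewrite !mxE.
have -> : (q == p) = false by apply/negbTE; rewrite neq_ltn lt_pq orbT.
case: ifP => H; last by rewrite subr0.
by have := ltn_blk H; rewrite ltnNge ltnW.
Qed.

Lemma det_Nmx_of_Fpert : \det (Nmx_of Fp) = d.
Proof. by rewrite Nmx_Upert det_mulmx det_1_Upert mulr1. Qed.

Lemma det_Dmx_of_Fpert_nondeg (rho : 'I_m) i j :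
  \det (Dmx_of Fp rho i j) = (1 + beta rho * (~~ odd rho)%:R) * \det (Dmx_of (F k) rho i j).
Proof.
rewrite !det_Dmx_of -Nmx_Nmx_of -/Xsol.
have -> : \adj (Nmx_of Fp) *m Fp m = col_blocks Xpert.
  apply/eqP; rewrite -subr_eq0; apply/eqP.
  apply: (mulmx_eq0_det (A := Nmx_of Fp)); first by rewrite det_Nmx_of_Fpert.
  by rewrite mulmxBr Nmx_of_Fpert_Xpert mulmxA mul_mx_adj det_Nmx_of_Fpert mul_scalar_mx subrr.
rewrite mxE blk_mxvec_index /Xpert /= pi_last_Ures.
rewrite (_ : Xsol (idx rho i) j = Xblk rho i j); last by rewrite /Xblk /blocks_of mxE.
by move: (Xblk rho) => X; rewrite !mxE; ring.
Qed.

End Perturbation.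

Section Morphism.
Variables (R S : comNzRingType) (f : {rmorphism R -> S}) (n s : nat).
Variables (a : nat -> nat -> 'M[R]_n) (am : nat -> nat -> 'M[S]_n).
Hypothesis map_a : forall x r, map_mx f (a x r) = am x r.
Local Notation M := (msz s * n)%N.

Lemma map_Qmx x : map_mx f (Qmx s a x) = Qmx s am x.
Proof.
apply/matrixP=> p q; rewrite !mxE; case: (blk p) => bp ip; case: (blk q) => bq iq.
case: ifP => _; first by rewrite -map_a mxE.
by case: ifP => _; rewrite ?rmorph_nat ?rmorph0.
Qed.

Lemma map_rmx x : map_mx f (rmx s a x) = rmx s am x.
Proof.
apply/matrixP=> p q; rewrite !mxE; case: (blk p) => bp ip.
by case: ifP => _; rewrite ?rmorph0 // -map_a mxE.
Qed.

Lemma map_pi_last : map_mx f (pi_last R n s) = pi_last S n s.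
Proof. by apply/matrixP=> p q; rewrite !mxE rmorph_nat. Qed.

Lemma map_Qprod k L : map_mx f (Qprod s a k L) = Qprod s am k L.
Proof.
elim: L => [|L IH] /=; first by rewrite map_scalar_mx rmorph1.
by rewrite map_mxM IH map_Qmx.
Qed.

Lemma map_Fmx k L : map_mx f (Fmx s a k L) = Fmx s am k L.
Proof. by rewrite map_mxM map_Qprod map_rmx. Qed.

Lemma map_Nmx k : map_mx f (Nmx s a k) = Nmx s am k.
Proof.
apply/matrixP=> p q; rewrite !mxE; case: (blk q) => bq iq.
by rewrite -map_Fmx [RHS]mxE.
Qed.

Lemma map_Dmx_of (F : nat -> 'M[R]_(M, n)) (Fm : nat -> 'M[S]_(M, n)) rho i j :
  (forall L, map_mx f (F L) = Fm L) -> map_mx f (Dmx_of F rho i j) = Dmx_of Fm rho i j.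
Proof.
move=> map_F; apply/matrixP=> p q; rewrite !mxE -!map_F.
by case: ifP => _; rewrite mxE.
Qed.

Lemma map_det_Dmx_of_Fmx k rho i j :
  f (\det (Dmx_of (Fmx s a k) rho i j)) = \det (Dmx_of (Fmx s am k) rho i j).
Proof. by rewrite -det_map_mx (map_Dmx_of _ _ _ (map_Fmx k)). Qed.

Variables (k : nat) (beta : nat -> R) (bm : nat -> S).
Hypothesis map_beta : forall x, f (beta x) = bm x.

Lemma map_Ppert L : map_mx f (Ppert s a k beta L) = Ppert s am k bm L.
Proof.
elim: L => [|L IH] /=; first by rewrite map_scalar_mx rmorph1.
rewrite map_mxM IH /Qpert map_mxD map_mxZ map_mxM map_Qmx map_rmx map_pi_last.
by rewrite map_beta.
Qed.

Lemma map_det_Dmx_of_Fpert rho i j :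
  f (\det (Dmx_of (Fpert s a k beta) rho i j)) = \det (Dmx_of (Fpert s am k bm) rho i j).
Proof.
rewrite -det_map_mx (map_Dmx_of (Fm := Fpert s am k bm)) // => L.
by rewrite map_mxM map_Ppert map_rmx.
Qed.

End Morphism.

Section TrivialCoefficients.
Variables (R : comNzRingType) (n s : nat).
Local Notation M := (msz s * n)%N.
Local Notation m := (msz s).

Definition a_triv : nat -> nat -> 'M[R]_n := fun _ r => if r == 0%N then 1%:M else 0.

Definition iota_blk (b : nat) : 'M[R]_(M, n) :=
  \matrix_(p, j) ((nat_of_ord (blk p).1 == b) && ((blk p).2 == j))%:R.

Lemma Qmx_triv_iota x (b : nat) : (b < 2 * s)%N ->
  Qmx s a_triv x *m iota_blk b = iota_blk b.+1.
Proof.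
move=> lt_b; have lt_bm : (b < m)%N by rewrite /msz ltnS ltnW.
apply/matrixP=> p j; rewrite mxE big_blk (bigD1 (Ordinal lt_bm)) //=.
rewrite [X in _ + X]big1 ?addr0 => [|x0 Hx0]; last first.
  apply: big1 => i _; rewrite [iota_blk _ _ _]mxE blk_mxvec_index /=.
  have -> : (nat_of_ord x0 == b) = false.
    by apply/negbTE; apply: contra Hx0 => /eqP H; apply/eqP/val_inj.
  by rewrite mulr0.
rewrite (bigD1 j) //= [X in _ + X]big1 ?addr0 => [|i Hi]; last first.
  by rewrite [iota_blk _ _ _]mxE blk_mxvec_index /= eqxx (negbTE Hi) mulr0.
rewrite [iota_blk _ _ _]mxE blk_mxvec_index /= !eqxx mulr1 mxE blk_mxvec_index.
rewrite -[p]mxvec_index_blk blk_mxvec_index mxE blk_mxvec_index.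
case: (blk p) => bp ip /=; rewrite (ltn_eqF lt_b).
by case: eqP => _; rewrite ?andbF ?andbT // eq_sym.
Qed.

Lemma Qprod_triv_iota x L b : (b + L < m)%N ->
  Qprod s a_triv x L *m iota_blk b = iota_blk (b + L).
Proof.
elim: L b => [|L IH] b lt_bL /=; first by rewrite mul1mx addn0.
rewrite -mulmxA Qmx_triv_iota; last first.
  by rewrite /msz ltnS addnS in lt_bL; apply: leq_trans lt_bL; rewrite ltnS leq_addr.
by rewrite IH ?addSnnS.
Qed.

Lemma rmx_triv x : rmx s a_triv x = iota_blk 0.
Proof.
apply/matrixP=> p j; rewrite !mxE; case: (blk p) => bp ip /=.
rewrite /a_triv; case: eqP => [->|_] /=; first by rewrite mxE.
by case: odd; rewrite ?mxE ?andFb.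
Qed.

Lemma Nmx_triv x : Nmx s a_triv x = 1%:M.
Proof.
apply/matrixP=> p q; rewrite -[q]mxvec_index_blk.
case: (blk q) => bq iq; rewrite [LHS]mxE blk_mxvec_index.
by rewrite /Fmx rmx_triv Qprod_triv_iota ?add0n ?ltn_ord // !mxE eq_mxvec_index.
Qed.

End TrivialCoefficients.

Lemma det_Dmx_of_Fpert (R : idomainType) (two_neq0 : (2%:R : R) != 0) n s
    (a : nat -> nat -> 'M[R]_n) k (beta : nat -> R) (rho : 'I_(msz s)) i j :
  \det (Dmx_of (Fpert s a k beta) rho i j) =
  (1 + beta rho * (~~ odd rho)%:R) * \det (Dmx_of (Fmx s a k) rho i j).
Proof.
pose ap x r := map_mx polyC (a x r) + 'X *: map_mx polyC (a_triv R n x r - a x r).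
have ev c x r : map_mx (horner_eval c) (ap x r) = a x r + c *: (a_triv R n x r - a x r).
  by apply/matrixP=> p q; rewrite !mxE /= horner_evalE !hornerE.
have ev0 x r : map_mx (horner_eval 0) (ap x r) = a x r by rewrite ev scale0r addr0.
have ev1 x r : map_mx (horner_eval 1) (ap x r) = a_triv R n x r.
  by rewrite ev scale1r addrC subrK.
have beta_ev0 x : horner_eval 0 (beta x)%:P = beta x by rewrite horner_evalE hornerC.
have detN_neq0 : \det (Nmx s ap k) != 0.
  apply/eqP => /(congr1 (horner_eval 1)).
  rewrite -det_map_mx (map_Nmx _ ev1) Nmx_triv det1 rmorph0 => /eqP.
  by rewrite oner_eq0.
have two_neq0P : (2%:R : {poly R}) != 0 by rewrite -polyC_natr polyC_eq0.
have := det_Dmx_of_Fpert_nondeg detN_neq0 two_neq0P (fun x => (beta x)%:P) rho i j.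
move/(congr1 (horner_eval 0)).
rewrite (map_det_Dmx_of_Fpert _ ev0 _ beta_ev0) rmorphM (map_det_Dmx_of_Fmx _ ev0).
by rewrite rmorphD rmorph1 rmorphM rmorph_nat /= horner_evalE hornerC.
Qed.

Section Gauge.
Variables (R : fieldType) (n s : nat) (a : nat -> nat -> 'M[R]_n) (k : nat) (mu t : R).
Hypotheses (t_neq0 : t != 0) (t_exp_s : t ^+ s = mu).
Local Notation M := (msz s * n)%N.
Local Notation m := (msz s).
Local Notation idx := (@mxvec_index (msz s) n).
Local Notation a' := (scaled mu t a).

Definition gauge_exp (x b : nat) : nat := ((s - b./2) + (odd x && ~~ odd b))%N.
Definition Gauge (x : nat) : 'M[R]_M := diag_mx (\row_p (t ^+ gauge_exp x (blk p).1)).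
Definition gauge_beta (x : nat) : R := t ^+ (s + odd x) - 1.

Lemma half_msz (b : 'I_m) : (b./2 <= s)%N.
Proof. by have := ltn_ord b; rewrite /msz ltnS -[in X in (X <= _)%N -> _](odd_double_half b); lia. Qed.

Lemma gauge_exp_shift x (b : nat) : (b < 2 * s)%N ->
  (~~ odd x + gauge_exp x b.+1 = gauge_exp x.+1 b)%N.
Proof.
rewrite /gauge_exp -uphalfE uphalf_half /= -[in X in (X < _)%N -> _](odd_double_half b).
by case: (odd x); case: (odd b) => /=; lia.
Qed.

Lemma gauge_exp_top x : gauge_exp x.+1 (2 * s) = ~~ odd x.
Proof. by rewrite /gauge_exp mul2n doubleK subnn odd_double andbT. Qed.

Lemma gauge_scale_coef x (b : 'I_m) :
  t ^+ gauge_exp x b * scale_coef mu t b = if odd b then 1 else t ^+ (s + odd x).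
Proof.
have le_bs := half_msz b; rewrite /scale_coef /gauge_exp.
case: ifP => odd_b /=; rewrite ?andbF ?andbT ?addn0.
  by rewrite mulrCA -exprD subnK // t_exp_s mulVf // -t_exp_s expf_neq0.
by rewrite -exprD -addnA [(odd x + _)%N]addnC addnA subnK.
Qed.

Lemma Gauge_rmx x : Gauge x *m rmx s a' (k + x) = t ^+ (s + odd x) *: rmx s a (k + x).
Proof.
apply/matrixP=> p j; rewrite mul_diag_mx !mxE -[p]mxvec_index_blk blk_mxvec_index.
case: (blk p) => b i /=; case: ifP => odd_b; first by rewrite !mulr0.
by rewrite !mxE mulrA gauge_scale_coef odd_b.
Qed.

Lemma Gauge_Qmx x :
  t ^+ (~~ odd x) *: (Gauge x *m Qmx s a' (k + x)) = Qpert s a k gauge_beta x *m Gauge x.+1.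
Proof.
apply/matrixP=> p q; rewrite mul_mx_diag mul_diag_mx !mxE.
have := rmx_pi_lastE a (k + x) p q; rewrite mxE => ->.
rewrite -[p]mxvec_index_blk -[q]mxvec_index_blk !blk_mxvec_index.
case: (blk p) => bp ip; case: (blk q) => bq iq /=; rewrite !mxE !blk_mxvec_index /=.
case: eqP => [top_q|ntop_q].
  rewrite top_q gauge_exp_top.
  transitivity (t ^+ (~~ odd x) * (t ^+ gauge_exp x bp * scale_coef mu t bp)
                  * a (k + x) bp ip iq); first by ring.
  by rewrite gauge_scale_coef /gauge_beta; case: (odd bp); ring.
case: eqP => [sub_pq|_]; last by rewrite !mulr0 addr0 mul0r.
have lt_bq : (bq < 2 * s)%N.
  by rewrite ltn_neqAle; apply/andP; split; [apply/eqP | have := ltn_ord bq].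
by rewrite mulr0 addr0 mulrA -exprD -gauge_exp_shift // -sub_pq; ring.
Qed.

Lemma Gauge_Qprod L :
  t ^+ uphalf L *: (Gauge 0 *m Qprod s a' k L) = Ppert s a k gauge_beta L *m Gauge L.
Proof.
elim: L => [|L IH]; first by rewrite /= scale1r mulmx1 mul1mx.
have -> : uphalf L.+1 = (~~ odd L + uphalf L)%N.
  by rewrite !uphalf_half -uphalfE uphalf_half /=; case: (odd L).
rewrite [Qprod _ _ _ _]/= exprD -scalerA mulmxA scalemxAl IH.
by rewrite -mulmxA scalemxAr Gauge_Qmx /= mulmxA.
Qed.

Lemma Gauge_Fmx L : (L./2 <= s)%N ->
  Gauge 0 *m Fmx s a' k L = t ^+ (s - L./2) *: Fpert s a k gauge_beta L.
Proof.
move=> le_Ls; apply: (scalerI (expf_neq0 (uphalf L) t_neq0)).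
rewrite /Fmx mulmxA scalemxAl Gauge_Qprod -mulmxA Gauge_rmx -scalemxAr scalerA -!exprD.
by congr (t ^+ _ *: _); rewrite uphalf_half; lia.
Qed.

Lemma Gauge_FmxE L (p : 'I_M) j : (L./2 <= s)%N ->
  t ^+ gauge_exp 0 (blk p).1 * Fmx s a' k L p j = t ^+ (s - L./2) * Fpert s a k gauge_beta L p j.
Proof. by move/Gauge_Fmx/matrixP/(_ p j); rewrite mul_diag_mx !mxE. Qed.

(* Rescaling the rows by [Gauge 0] rescales every column of the [D]-matrix except the
   replaced one, whose scale [t ^ (s - rho/2)] is thus left over. *)
Lemma det_Dmx_of_scaled (rho : 'I_m) i j :
  t ^+ (s - rho./2) * \det (Dmx_of (Fmx s a' k) rho i j) =
  \det (Dmx_of (Fpert s a k gauge_beta) rho i j).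
Proof.
set q0 := idx rho i.
pose g := \row_q (if q == q0 then 1 else t ^+ (s - (@blk n s q).1./2)) : 'rV[R]_M.
have detG : \det (Gauge 0) = t ^+ (s - rho./2) * \det (diag_mx g).
  rewrite !det_diag (bigD1 q0) //= [in RHS](bigD1 q0) //= !mxE eqxx mul1r.
  rewrite /q0 blk_mxvec_index /gauge_exp /= addn0; congr (_ * _).
  by apply: eq_bigr => q nq0; rewrite !mxE (negbTE nq0) /gauge_exp /= addn0.
have detg : \det (diag_mx g) != 0.
  rewrite det_diag; apply/prodf_neq0 => q _; rewrite /g mxE.
  by case: ifP => _; [exact: oner_neq0 | exact: expf_neq0].
have DG : Gauge 0 *m Dmx_of (Fmx s a' k) rho i j =
          Dmx_of (Fpert s a k gauge_beta) rho i j *m diag_mx g.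
  apply/matrixP=> p q; rewrite mul_diag_mx mul_mx_diag [LHS]mxE [RHS]mxE.
  rewrite [(\row__ _) 0 p]mxE [g 0 q]mxE [Dmx_of _ _ _ _ p q]mxE.
  rewrite [Dmx_of (Fpert _ _ _ _) _ _ _ p q]mxE -eq_mxvec_index -/q0.
  case: eqP => _.
    have half_top : ((2 * s).+1)./2 = s by rewrite -uphalfE mul2n uphalf_double.
    by rewrite Gauge_FmxE half_top ?leqnn // subnn expr0 mul1r mulr1.
  by rewrite [Nmx_of _ p q]mxE [Nmx_of (Fpert _ _ _ _) p q]mxE Gauge_FmxE ?half_msz // mulrC.
by apply: (mulIf detg); rewrite mulrAC -detG -det_mulmx DG det_mulmx.
Qed.

End Gauge.

Unset Implicit Arguments. Set Strict Implicit. Set Printing Implicit Defensive.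

Theorem mainTheorem9 (R : realFieldType) (n s N : nat)
    (hn : (1 <= n)%N) (hs : (1 <= s)%N) (hN : (1 <= N)%N)
    (a : nat -> nat -> 'M[R]_n)
    (hper : forall k r, a (k + N)%N r = a k r)
    (k : nat) (i j : 'I_n) (l : nat) (hl : (l < s)%N)
    (mu t : R) (hmu : 0 < mu) (ht : 0 < t) (hts : t ^+ s = mu) :
  Ddet s (scaled mu t a) k (2 * l) i j = t ^+ l * Ddet s a k (2 * l) i j.
Proof.
have lt_lm : (2 * l < msz s)%N by rewrite /msz ltnS; lia.
have t_neq0 : t != 0 by rewrite gt_eqF.
have two_neq0 : (2%:R : R) != 0 by rewrite pnatr_eq0.
have := det_Dmx_of_scaled a k t_neq0 hts (Ordinal lt_lm) i j.
rewrite (det_Dmx_of_Fpert two_neq0) /gauge_beta /= oddM /= addn0 mulr1.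
rewrite addrC subrK mul2n doubleK -!Ddet_Dmx_of => E.
by apply: (mulfI (expf_neq0 (s - l) t_neq0)); rewrite E mulrA -exprD subnK // ltnW.
Qed.
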